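(* Let $S$ be any set, $m\ge 2$, $s:I_m\to S$, and $s'=\tau_{m-1}s$. If $(s,s')$ is a special pair, then $s=s'$.
   Context: $\mathcal{S}_m$ acts on sequences $s:I_m\to S$ by $\sigma s=s\circ\sigma^{-1}$. For $i\in I_m$, $\tau_i(j)=i+1-j$ for $j\le i$ and $\tau_i(j)=j$ for $j>i$; thus $(\tau_{m-1}s)(i)=s(m-i)$ for $i<m$ and $(\tau_{m-1}s)(m)=s(m)$. $(\mathrm{rev}\,s)(i)=s(m+1-i)$. An element $A\in\mathrm{Im}\,s$ is direct for $(s,s')$ if $s'(i)=A$ for all $i\in s^{-1}(A)$, and reverse for $(s,s')$ if $(\mathrm{rev}\,s')(i)=A$ for all $i\in s^{-1}(A)$. The pair $(s,s')$ is special if every $A\in\mathrm{Im}\,s$ is direct or reverse for $(s,s')$. *)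

From mathcomp Require Import all_boot all_fingroup.
Set Implicit Arguments. Unset Strict Implicit. Unset Printing Implicit Defensive.

(* Convention: the paper's index set I_m = {1,...,m} is represented by 'I_m
   = {0,...,m-1}; the paper's index p corresponds to the ordinal of value p-1. *)

(* The paper's tau_k (k a 1-based index in I_m): tau_k(p) = k+1-p for p <= k,
   tau_k(p) = p for p > k.  In 0-based terms: j |-> k-1-j for j < k.
   (For k > m, which never occurs in the paper, we let it be the identity.) *)
Definition tau_fun (m k : nat) (j : 'I_m) : 'I_m :=
  if (j < k) && (k <= m) then insubd j (k.-1 - j) else j.

Lemma tau_funK m k : involutive (@tau_fun m k).
Proof.
move=> j; rewrite /tau_fun.
have [/andP [jk km] | nj] := boolP ((j < k) && (k <= m)); last by rewrite (negbTE nj).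
have k0 : 0 < k by apply: leq_ltn_trans jk.
have lt2 : k.-1 - j < k by rewrite (leq_ltn_trans (leq_subr _ _)) // prednK.
have lt1 : k.-1 - j < m by apply: leq_trans lt2 km.
have v : nat_of_ord (insubd j (k.-1 - j) : 'I_m) = k.-1 - j by rewrite val_insubd lt1.
rewrite v lt2 km /=; apply: val_inj; rewrite val_insubd subKn ?ltn_ord //.
by rewrite -ltnS prednK.
Qed.

Definition tau (m k : nat) : {perm 'I_m} := perm (can_inj (@tau_funK m k)).

Definition sm_act (S : Type) (m : nat) (sigma : {perm 'I_m}) (s : 'I_m -> S) : 'I_m -> S :=
  fun i => s ((sigma^-1)%g i).

Definition rev_seq (S : Type) (m : nat) (s : 'I_m -> S) : 'I_m -> S :=
  fun i => s (rev_ord i).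

Definition in_image (S : Type) (m : nat) (s : 'I_m -> S) (A : S) : Prop :=
  exists i, s i = A.

Definition direct (S : Type) (m : nat) (s s' : 'I_m -> S) (A : S) : Prop :=
  forall i, s i = A -> s' i = A.

Definition reverse (S : Type) (m : nat) (s s' : 'I_m -> S) (A : S) : Prop :=
  forall i, s i = A -> rev_seq s' i = A.

Definition special (S : Type) (m : nat) (s s' : 'I_m -> S) : Prop :=
  forall A, in_image s A -> direct s s' A \/ reverse s s' A.

From mathcomp Require Import all_boot all_fingroup.
From mathcomp Require Import zify.
From Stdlib Require Import FunctionalExtensionality.

Set Implicit Arguments.
Unset Strict Implicit.
Unset Printing Implicit Defensive.

(* Reading [tau_{m-1} s] backwards gives [s] shifted by one place cyclically:
   [(rev s')(i) = s(i-1)] for [i > 1] and [(rev s')(1) = s(m)].  Hence a value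
   [A] that is reverse for [(s, s')] has a preimage closed under the cyclic
   predecessor, i.e. [s] is constantly [A], and then [s' = s] anyway; a value
   that is direct gives [s' = s] on its preimage directly. *)

Lemma ord_pred_val n (i : 'I_n) :
  val (ord_pred i) = if val i == 0 then n.-1 else (val i).-1.
Proof.
have ltin := ltn_ord i; rewrite /=.
case: eqP => [-> | /eqP i_neq0]; first by rewrite add0n modn_small //; lia.
have -> : (i + n).-1 = i.-1 + n by lia.
by rewrite modnDr modn_small //; lia.
Qed.

Lemma ord_pred_closed_total n (P : 'I_n -> Prop) :
  (forall i, P i -> P (ord_pred i)) -> forall i j, P i -> P j.
Proof.
move=> closedP.
have down d (i j : 'I_n) : P i -> j + d = i -> P j.
  elim: d i => [|d IH] i Pi ji; first by rewrite addn0 in ji; rewrite (val_inj ji).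
  by apply: (IH _ (closedP _ Pi)); rewrite ord_pred_val /= -ji addnS.
case: n P closedP down => [|n] P closedP down i j Pi; first by case: i Pi.
have P_max : P ord_max.
  have <- : ord_pred (@ord0 n) = ord_max by apply: val_inj; rewrite ord_pred_val.
  exact: closedP (down i i ord0 Pi (add0n i)).
by apply: (down (n - j) ord_max j P_max) => /=; have := ltn_ord j; lia.
Qed.

Lemma tau_inv m k (i : 'I_m) : ((tau m k)^-1)%g i = tau_fun k i.
Proof.
have tauK : tau_fun k (((tau m k)^-1)%g i) = i.
  by rewrite -[tau_fun k _](permE (can_inj (@tau_funK m k))) permKV.
by rewrite -{2}tauK tau_funK.
Qed.

Lemma rev_tau_last (S : Type) m (s : 'I_m -> S) :
  rev_seq (sm_act (tau m m.-1) s) =1 s \o @ord_pred m.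
Proof.
move=> j; rewrite /rev_seq /sm_act tau_inv /=; congr (s _); apply: val_inj.
have ltjm := ltn_ord j; rewrite ord_pred_val /tau_fun /= leq_pred andbT.
case: ifP => [lt_rev | /negbT]; last by rewrite /=; case: eqP; lia.
by rewrite val_insubd /=; case: ifP; case: eqP; lia.
Qed.

Lemma reverse_tau_last_const (S : Type) m (s : 'I_m -> S) (A : S) :
  in_image s A -> reverse s (sm_act (tau m m.-1) s) A -> forall j, s j = A.
Proof.
move=> [i si] revA j; apply: (@ord_pred_closed_total m (fun k => s k = A) _ i) => // k sk.
by have /= <- := rev_tau_last s k; exact: revA.
Qed.

Theorem mainTheorem19 (S : Type) (m : nat) (hm : 2 <= m) (s : 'I_m -> S) :
  special s (sm_act (tau m m.-1) s) -> s = sm_act (tau m m.-1) s.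
Proof.
move=> specialS; apply: functional_extensionality => i.
have imA : in_image s (s i) by exists i.
have [directA | reverseA] := specialS _ imA; first by rewrite (directA i).
by rewrite /sm_act !(reverse_tau_last_const imA reverseA).
Qed.
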